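(* For $\ell\in\mathbb N_0$ and $t\in(0,\pi)$ let $u_{0\ell}(t)=\tfrac1{\sqrt2}\mathscr P_\ell(\cos t)$ and $v_{0\ell}(t)=\tfrac1{\sqrt2}\mathscr Q_\ell(\cos t)$. For sequences $\rho_\ell>0$, $\nu_\ell\in\mathbb R$ ($\ell\in\mathbb N_0$) set $y_\ell=\rho_\ell u_{0\ell}+(\nu_\ell+i\rho_\ell^{-1})v_{0\ell}$ and, for $t_0,t_1\in(0,\pi)$, $$\beta_\ell(t_1,t_0|y_\ell)=i\big(\sin t_1\,\bar y_\ell(t_0)\dot{\bar y}_\ell(t_1)-\sin t_0\,\bar y_\ell(t_1)\dot{\bar y}_\ell(t_0)\big).$$ Then there is no choice of sequences $(\rho_\ell,\nu_\ell)_{\ell\in\mathbb N_0}\in((0,\infty)\times\mathbb R)^{\mathbb N_0}$ such that $\sum_{\ell=0}^\infty|\beta_\ell(t_1,t_0|y_\ell)|^2<\infty$ for all $t_0,t_1\in(0,\pi)$. Equivalently, the classical time evolution of the axially symmetric massless scalar field $\varphi$ on $(0,\pi)\times\mathbb S^2$ with metric $\sin^2t(-dt^2+\gamma)$ ($\gamma$ the round metric) is not unitarily implementable in the Fock quantization defined by any $SO(3)$-invariant complex structure.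
   Context: $\mathscr P_\ell$ and $\mathscr Q_\ell$ are the Legendre functions of the first and second kind (on the cut $(-1,1)$); the bar denotes complex conjugation and dots derivatives with respect to $t$. Each $y_\ell$ solves $\ddot y_\ell+\cot t\,\dot y_\ell+\ell(\ell+1)y_\ell=0$ with Wronskian $\mathrm{Re}y_\ell\,\mathrm{Im}\dot y_\ell-\mathrm{Re}\dot y_\ell\,\mathrm{Im}y_\ell=\tfrac{1}{2\sin t}$; the $SO(3)$-invariant complex structures on the space of axially symmetric solutions are in bijection with the pairs $(\rho_\ell,\nu_\ell)$ (via declaring $y_\ell Y_{\ell0}$ to span the $+i$ eigenspace, $Y_{\ell0}$ the axially symmetric spherical harmonics), and unitary implementability of evolution from $t_0$ to $t_1$ is equivalent to square-summability of $(\beta_\ell(t_1,t_0|y_\ell))_\ell$. *)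

From Stdlib Require Import Reals.
From Coquelicot Require Import Coquelicot.
Open Scope R_scope.

(* Generic Legendre three-term (Bonnet) recurrence:
   (n+2) f_{n+2}(x) = (2n+3) x f_{n+1}(x) - (n+1) f_n(x),
   started from (f_0, f_1) = (a, b).  legendre_pair a b n x = (f_n(x), f_{n+1}(x)). *)
Fixpoint legendre_pair (a b : R -> R) (n : nat) (x : R) : R * R :=
  match n with
  | O => (a x, b x)
  | S m =>
      let p := legendre_pair a b m x in
      (snd p, ((2 * INR m + 3) * x * snd p - (INR m + 1) * fst p) / (INR m + 2))
  end.

Definition legendreP (l : nat) (x : R) : R :=
  fst (legendre_pair (fun _ => 1) (fun x => x) l x).

(* Ferrers/Legendre function of the second kind on the cut (-1,1):
   Q_0(x) = 1/2 ln((1+x)/(1-x)),  Q_1(x) = x Q_0(x) - 1, same recurrence. *)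
Definition legendreQ0 (x : R) : R := / 2 * ln ((1 + x) / (1 - x)).
Definition legendreQ (l : nat) (x : R) : R :=
  fst (legendre_pair legendreQ0 (fun x => x * legendreQ0 x - 1) l x).

Definition u0 (l : nat) (t : R) : R := / sqrt 2 * legendreP l (cos t).
Definition v0 (l : nat) (t : R) : R := / sqrt 2 * legendreQ l (cos t).

Definition ymode (rho nu : R) (l : nat) (t : R) : C :=
  (RtoC (rho * u0 l t) + (RtoC nu + Ci * RtoC (/ rho)) * RtoC (v0 l t))%C.

Definition Cderiv (f : R -> C) (t : R) : C :=
  (Derive (fun s => fst (f s)) t, Derive (fun s => snd (f s)) t).

Definition beta (y : R -> C) (t1 t0 : R) : C :=
  (Ci * (RtoC (sin t1) * Cconj (y t0) * Cconj (Cderiv y t1)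
         - RtoC (sin t0) * Cconj (y t1) * Cconj (Cderiv y t0)))%C.

From Stdlib Require Import Reals Lra Lia.
From Coquelicot Require Import Coquelicot.
Open Scope R_scope.

(* Write y_l = rho u + (nu + i/rho) v with u, v the real modes P_l(cos t)/sqrt 2 and
   Q_l(cos t)/sqrt 2, and P = sin t * d/dt.  Expanding beta gives
   |beta_l(t1,t0)|^2 = Q^2 + (tr Phi_l)^2 / 4 - 1, where Q depends on (rho, nu) but the
   rest does not: Phi_l is the transfer matrix (Y, P)(t0) |-> (Y, P)(t1) of the mode
   equation, whose determinant is 1 because the Wronskian of u, v is -1/2.
   The Liouville substitution w = sqrt (sin t) Y turns the mode equation into a harmonic
   oscillator of frequency om = l + 1/2 perturbed by 1/(4 sin^2 t), which is bounded on
   [pi/10, pi/2].  A Gronwall estimate on the energy shows that, up to O(1/om), Phi_l is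
   the rotation by om * 2pi/5 conjugated by the scaling sqrt (sin (pi/10)) = r.  For
   l = 5j + 2 that rotation is by an odd multiple of pi, so tr Phi_l is close to
   -(r + 1/r), whose square exceeds 4 by a fixed margin; hence |beta_l|^2 >= 1/20 for
   infinitely many l, for every choice of (rho, nu). *)

Ltac rewrite_Derive H :=
  match type of H with
  | is_derive ?f ?x ?d =>
      replace (Derive (fun y => f y) x) with d by (symmetry; exact (is_derive_unique _ _ _ H))
  end.

Lemma MVT_closed (f df : R -> R) (a b : R) : a <= b ->
  (forall x, a <= x <= b -> is_derive f x (df x)) ->
  exists c, a <= c <= b /\ f b - f a = df c * (b - a).
Proof.
intros Hab HD.
destruct (MVT_gen f a b df) as [c [Hc E]];
  rewrite ?Rmin_left, ?Rmax_right in * by lra.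
- intros x Hx; apply HD; lra.
- intros x Hx; apply continuity_pt_filterlim, (ex_derive_continuous f x).
  eexists; apply HD, Hx.
- exists c; split; assumption.
Qed.

Lemma derive_nonneg_le (f df : R -> R) (a b : R) : a <= b ->
  (forall x, a <= x <= b -> is_derive f x (df x)) ->
  (forall x, a <= x <= b -> 0 <= df x) -> f a <= f b.
Proof.
intros Hab HD Hpos; destruct (MVT_closed f df a b Hab HD) as [c [Hc E]].
assert (0 <= df c * (b - a)) by (apply Rmult_le_pos; [exact (Hpos c Hc) | lra]); lra.
Qed.

Lemma derive_bounded_diff (f df : R -> R) (a b K : R) : a <= b ->
  (forall x, a <= x <= b -> is_derive f x (df x)) ->
  (forall x, a <= x <= b -> Rabs (df x) <= K) -> Rabs (f b - f a) <= K * (b - a).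
Proof.
intros Hab HD HK; destruct (MVT_closed f df a b Hab HD) as [c [Hc E]].
rewrite E, Rabs_mult, (Rabs_right (b - a)) by lra.
apply Rmult_le_compat_r; [lra | exact (HK c Hc)].
Qed.

Definition legendre_deriv_rel (f g : R -> R) (k x : R) : Prop :=
  exists df dg, is_derive f x df /\ is_derive g x dg /\
    dg - x * df = k * f x /\ x * dg - df = k * g x.

Section LegendreRecurrence.
Variables a b : R -> R.

Local Notation f n := (fun y => fst (legendre_pair a b n y)).
Local Notation g n := (fun y => snd (legendre_pair a b n y)).

Lemma legendre_pair_deriv_rel (x : R) (n : nat) :
  legendre_deriv_rel a b 1 x -> legendre_deriv_rel (f n) (g n) (INR n + 1) x.
Proof.
intros Hbase; induction n as [|m [df [dg [Df [Dg [E1 E2]]]]]].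
- simpl; rewrite Rplus_0_l; exact Hbase.
- assert (Hm : INR m + 2 <> 0) by (pose proof (pos_INR m); lra).
  exists dg, (x * dg + (INR m + 2) * g m x).
  rewrite S_INR; simpl fst; simpl snd.
  split; [exact Dg|]; split; [|split].
  + set (F := f m) in Df; set (G := g m) in Dg.
    apply (is_derive_ext (fun y => ((2 * INR m + 3) * y * G y - (INR m + 1) * F y) * / (INR m + 2)));
      [reflexivity|].
    auto_derive; [repeat split; eexists; eassumption|].
    rewrite_Derive Df; rewrite_Derive Dg; unfold F, G.
    replace df with (x * dg - (INR m + 1) * G x) by (unfold G; lra).
    unfold G; field; exact Hm.
  + ring.
  + assert (E : (x * x - 1) * dg = x * (x * dg - df) - (dg - x * df)) by ring.
    rewrite E1, E2 in E.
    transitivity ((x * x - 1) * dg + (INR m + 2) * x * g m x); [ring|].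
    rewrite E; field; exact Hm.
Qed.

End LegendreRecurrence.

Lemma legendre_pair_casoratian (a b c d : R -> R) (n : nat) (x : R) :
  (INR n + 1) * (snd (legendre_pair a b n x) * fst (legendre_pair c d n x)
                 - fst (legendre_pair a b n x) * snd (legendre_pair c d n x))
  = b x * c x - a x * d x.
Proof.
induction n as [|m IH]; [simpl; ring|].
rewrite S_INR, <- IH; simpl.
assert (Hm : INR m + 2 <> 0) by (pose proof (pos_INR m); lra).
field; exact Hm.
Qed.

Lemma legendreP_initial (x : R) : legendre_deriv_rel (fun _ => 1) (fun y => y) 1 x.
Proof.
exists 0, 1; split; [|split; [|split]].
- auto_derive; [easy|ring].
- auto_derive; [easy|ring].
- ring.
- ring.
Qed.

Lemma legendreQ_initial (x : R) : -1 < x < 1 ->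
  legendre_deriv_rel legendreQ0 (fun y => y * legendreQ0 y - 1) 1 x.
Proof.
intros Hx.
assert (Hx2 : 1 - x * x <> 0) by nra.
assert (DQ : is_derive legendreQ0 x (/ (1 - x * x))).
{ unfold legendreQ0; auto_derive.
  - repeat split; [lra|]; apply Rdiv_lt_0_compat; lra.
  - field; repeat split; lra. }
exists (/ (1 - x * x)), (legendreQ0 x + x / (1 - x * x)); split; [|split; [|split]].
- exact DQ.
- auto_derive; [eexists; exact DQ|].
  rewrite_Derive DQ; field; exact Hx2.
- field; exact Hx2.
- field; exact Hx2.
Qed.

(* [P] stands for [sin t * Y'], so this is the Legendre equation
   [Y'' + cot t Y' + (om^2 - 1/4) Y = 0] written as a first-order system. *)
Definition solves_mode (om : R) (Y P : R -> R) : Prop :=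
  forall t, 0 < t < PI ->
    is_derive Y t (P t / sin t) /\ is_derive P t (- (om ^ 2 - / 4) * sin t * Y t).

Lemma solves_mode_lin (om al be : R) (Y1 P1 Y2 P2 : R -> R) :
  solves_mode om Y1 P1 -> solves_mode om Y2 P2 ->
  solves_mode om (fun t => al * Y1 t + be * Y2 t) (fun t => al * P1 t + be * P2 t).
Proof.
intros H1 H2 t Ht.
destruct (H1 t Ht) as [DY1 DP1], (H2 t Ht) as [DY2 DP2].
assert (Hs : sin t <> 0) by (apply Rgt_not_eq, sin_gt_0; lra).
split; auto_derive; try (repeat split; eexists; eassumption);
  rewrite_Derive DY1; rewrite_Derive DY2; rewrite_Derive DP1; rewrite_Derive DP2;
  field; exact Hs.
Qed.

Lemma cos_open_interval (t : R) : 0 < t < PI -> -1 < cos t < 1.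
Proof.
intros Ht.
pose proof (sin_gt_0 t (proj1 Ht) (proj2 Ht)).
pose proof (sin2_cos2 t) as E; unfold Rsqr in E.
pose proof (COS_bound t); split; nra.
Qed.

Lemma solves_mode_legendre (f g : R -> R) (k c om : R) :
  om = k + / 2 ->
  (forall x, -1 < x < 1 -> legendre_deriv_rel f g k x) ->
  solves_mode om (fun t => c * g (cos t))
                 (fun t => - c * (k * (f (cos t) - cos t * g (cos t)))).
Proof.
intros -> Hrel t Ht.
pose proof (sin_gt_0 t (proj1 Ht) (proj2 Ht)) as Hs.
pose proof (sin2_cos2 t) as Hsc; unfold Rsqr in Hsc.
destruct (Hrel (cos t) (cos_open_interval t Ht)) as [df [dg [Df [Dg [E1 E2]]]]].
split.
- auto_derive; [eexists; exact Dg|].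
  rewrite_Derive Dg.
  assert (E : sin t * sin t * dg = k * (f (cos t) - cos t * g (cos t))).
  { replace (sin t * sin t) with (1 - cos t * cos t) by lra.
    transitivity ((dg - cos t * df) - cos t * (cos t * dg - df)); [ring|].
    rewrite E1, E2; ring. }
  rewrite <- E; field; lra.
- auto_derive; [repeat split; eexists; eassumption|].
  rewrite_Derive Df; rewrite_Derive Dg.
  replace df with (cos t * dg - k * g (cos t)) by lra.
  field.
Qed.

(* [sin t * d/dt] of [t |-> snd (legendre_pair a b n (cos t)) / sqrt 2], the mode of
   degree [l = n + 1]; the pair index is shifted so that [f_n] is available. *)
Definition legendre_momentum (a b : R -> R) (n : nat) (t : R) : R :=
  - / sqrt 2 * ((INR n + 1) *
    (fst (legendre_pair a b n (cos t)) - cos t * snd (legendre_pair a b n (cos t)))).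

Definition pu0 : nat -> R -> R := legendre_momentum (fun _ => 1) (fun y => y).
Definition pv0 : nat -> R -> R :=
  legendre_momentum legendreQ0 (fun y => y * legendreQ0 y - 1).

Lemma legendre_pair_solves_mode (a b : R -> R) (n : nat) :
  (forall x, -1 < x < 1 -> legendre_deriv_rel a b 1 x) ->
  solves_mode (INR n + 3 / 2) (fun t => / sqrt 2 * snd (legendre_pair a b n (cos t)))
    (legendre_momentum a b n).
Proof.
intros Hbase.
exact (solves_mode_legendre (fun y => fst (legendre_pair a b n y))
         (fun y => snd (legendre_pair a b n y)) (INR n + 1) (/ sqrt 2) (INR n + 3 / 2) ltac:(field)
         (fun x Hx => legendre_pair_deriv_rel a b x n (Hbase x Hx))).
Qed.

Lemma u0_solves_mode (n : nat) : solves_mode (INR n + 3 / 2) (u0 (S n)) (pu0 n).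
Proof. exact (legendre_pair_solves_mode _ _ n (fun x _ => legendreP_initial x)). Qed.

Lemma v0_solves_mode (n : nat) : solves_mode (INR n + 3 / 2) (v0 (S n)) (pv0 n).
Proof. exact (legendre_pair_solves_mode _ _ n legendreQ_initial). Qed.

Definition wronskian (u pu v pv : R -> R) (t : R) : R := u t * pv t - v t * pu t.

Lemma u0_v0_wronskian (n : nat) (t : R) :
  wronskian (u0 (S n)) (pu0 n) (v0 (S n)) (pv0 n) t = - / 2.
Proof.
pose proof (legendre_pair_casoratian (fun _ => 1) (fun y => y)
              legendreQ0 (fun y => y * legendreQ0 y - 1) n (cos t)) as C.
assert (S2 : sqrt 2 * sqrt 2 = 2) by (apply sqrt_sqrt; lra).
assert (S0 : sqrt 2 <> 0) by (apply Rgt_not_eq, sqrt_lt_R0; lra).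
unfold wronskian, u0, v0, pu0, pv0, legendre_momentum, legendreP, legendreQ; simpl fst.
transitivity (- ((INR n + 1) *
    (snd (legendre_pair (fun _ => 1) (fun y => y) n (cos t)) *
       fst (legendre_pair legendreQ0 (fun y => y * legendreQ0 y - 1) n (cos t)) -
     fst (legendre_pair (fun _ => 1) (fun y => y) n (cos t)) *
       snd (legendre_pair legendreQ0 (fun y => y * legendreQ0 y - 1) n (cos t))))
    / (sqrt 2 * sqrt 2)); [field; exact S0|].
rewrite C, S2; field.
Qed.

Section PerturbedOscillator.
Variables (w1 w2 q : R -> R) (om M a b : R).
Hypothesis Hom : 1 <= om.
Hypothesis Hab : a <= b.
Hypothesis Dw1 : forall t, a <= t <= b -> is_derive w1 t (w2 t).
Hypothesis Dw2 : forall t, a <= t <= b -> is_derive w2 t (- (om ^ 2 + q t) * w1 t).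
Hypothesis Hq : forall t, a <= t <= b -> 0 <= q t <= M.

Definition osc_energy (t : R) : R := w1 t ^ 2 + (w2 t / om) ^ 2.

Lemma osc_energy_le (t : R) : a <= t <= b ->
  osc_energy t <= osc_energy b * exp (M * (b - a)).
Proof.
intros Ht.
assert (HM : 0 <= M) by (pose proof (Hq a ltac:(lra)); lra).
set (K := M / om).
assert (HK : 0 <= K <= M).
{ unfold K; split; [apply Rdiv_le_0_compat; lra|].
  apply Rmult_le_reg_r with om; [lra|]. field_simplify; nra. }
(* Gronwall: [osc_energy' >= - (q / om) * osc_energy >= - K * osc_energy]. *)
assert (Hmono : osc_energy t * exp (K * t) <= osc_energy b * exp (K * b)).
{ apply (derive_nonneg_le (fun s => osc_energy s * exp (K * s))
    (fun s => (- 2 * q s * w1 s * w2 s / om ^ 2 + K * osc_energy s) * exp (K * s)));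
    [lra| |].
  - intros s Hs; pose proof (Dw1 s ltac:(lra)); pose proof (Dw2 s ltac:(lra)).
    unfold osc_energy; auto_derive; [repeat split; eexists; eassumption|].
    rewrite_Derive H; rewrite_Derive H0; field; lra.
  - intros s Hs; apply Rmult_le_pos; [|apply Rlt_le, exp_pos].
    pose proof (Hq s ltac:(lra)) as Hqs.
    assert (Hqk : q s / om <= K) by (apply Rmult_le_compat_r; [apply Rlt_le, Rinv_0_lt_compat|]; lra).
    assert (Hsq : 0 <= q s / om * (w1 s - w2 s / om) ^ 2)
      by (apply Rmult_le_pos; [apply Rdiv_le_0_compat|apply pow2_ge_0]; lra).
    assert (HE : 0 <= osc_energy s) by (unfold osc_energy; nra).
    assert (E : q s / om * (w1 s - w2 s / om) ^ 2
                = - 2 * q s * w1 s * w2 s / om ^ 2 + q s / om * osc_energy s)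
      by (unfold osc_energy; field; lra).
    nra. }
apply Rle_trans with (osc_energy b * exp (K * (b - t))).
- apply Rmult_le_reg_r with (exp (K * t)); [apply exp_pos|].
  rewrite Rmult_assoc, <- exp_plus; replace (K * (b - t) + K * t) with (K * b) by ring.
  exact Hmono.
- apply Rmult_le_compat_l; [unfold osc_energy; nra|].
  destruct (Req_dec (K * (b - t)) (M * (b - a))) as [->|Hne]; [lra|].
  left; apply exp_increasing; nra.
Qed.

(* Variation of constants: [w1 = osc_coef_cos * cos (om (t - b)) + osc_coef_sin *
   sin (om (t - b))], and both coefficients are constant when [q = 0]. *)
Definition osc_coef_cos (t : R) : R :=
  cos (om * (t - b)) * w1 t - sin (om * (t - b)) * w2 t / om.
Definition osc_coef_sin (t : R) : R :=
  sin (om * (t - b)) * w1 t + cos (om * (t - b)) * w2 t / om.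

Lemma osc_coef_drift (c T : R -> R) (R0 : R) : 0 <= R0 -> osc_energy b <= R0 ^ 2 ->
  (forall t, a <= t <= b -> is_derive c t (T t * q t * w1 t / om)) ->
  (forall t, Rabs (T t) <= 1) ->
  Rabs (c b - c a) <= M * (b - a) * exp (M * (b - a)) * R0 / om.
Proof.
intros HR HEb Dc HT.
set (G := exp (M * (b - a))).
assert (HM : 0 <= M) by (pose proof (Hq a ltac:(lra)); lra).
assert (HG : 1 <= G) by (pose proof (exp_ineq1_le (M * (b - a))); unfold G; nra).
assert (Hw1 : forall t, a <= t <= b -> Rabs (w1 t) <= G * R0).
{ intros t Ht; pose proof (osc_energy_le t Ht) as HE; fold G in HE.
  assert (w1 t ^ 2 <= (G * R0) ^ 2) by (unfold osc_energy in *; nra).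
  assert (0 <= G * R0) by nra.
  apply Rabs_le; split; nra. }
replace (M * (b - a) * G * R0 / om) with (M * G * R0 / om * (b - a)) by (field; lra).
apply (derive_bounded_diff _ _ _ _ _ Hab Dc).
intros t Ht; pose proof (Hq t Ht); pose proof (Hw1 t Ht); pose proof (HT t).
unfold Rdiv; rewrite !Rabs_mult, (Rabs_pos_eq (q t)), (Rabs_pos_eq (/ om)) by
  (lra || (apply Rlt_le, Rinv_0_lt_compat; lra)).
apply Rmult_le_compat_r; [apply Rlt_le, Rinv_0_lt_compat; lra|].
replace (M * G * R0) with (1 * M * (G * R0)) by ring.
pose proof (Rabs_pos (T t)); pose proof (Rabs_pos (w1 t)).
apply Rmult_le_compat; [nra|lra| |lra].
apply Rmult_le_compat; lra.
Qed.

Lemma osc_coef_cos_deriv (t : R) : a <= t <= b ->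
  is_derive osc_coef_cos t (sin (om * (t - b)) * q t * w1 t / om).
Proof.
intros Ht; pose proof (Dw1 t Ht); pose proof (Dw2 t Ht).
unfold osc_coef_cos; auto_derive; [repeat split; eexists; eassumption|].
rewrite_Derive H; rewrite_Derive H0; replace (t + - b) with (t - b) by ring; field; lra.
Qed.

Lemma osc_coef_sin_deriv (t : R) : a <= t <= b ->
  is_derive osc_coef_sin t (- cos (om * (t - b)) * q t * w1 t / om).
Proof.
intros Ht; pose proof (Dw1 t Ht); pose proof (Dw2 t Ht).
unfold osc_coef_sin; auto_derive; [repeat split; eexists; eassumption|].
rewrite_Derive H; rewrite_Derive H0; replace (t + - b) with (t - b) by ring; field; lra.
Qed.

Lemma osc_half_turn (R0 : R) : 0 <= R0 -> osc_energy b <= R0 ^ 2 ->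
  cos (om * (b - a)) = -1 ->
  Rabs (w1 a + w1 b) <= M * (b - a) * exp (M * (b - a)) * R0 / om /\
  Rabs (w2 a + w2 b) <= M * (b - a) * exp (M * (b - a)) * R0.
Proof.
intros HR HEb Hc.
assert (Hca : cos (om * (a - b)) = -1)
  by (replace (om * (a - b)) with (- (om * (b - a))) by ring; rewrite cos_neg; exact Hc).
assert (Hsa : sin (om * (a - b)) = 0)
  by (pose proof (sin2_cos2 (om * (a - b))) as E; unfold Rsqr in E; nra).
assert (Hb : om * (b - b) = 0) by ring.
pose proof (osc_coef_drift osc_coef_cos (fun t => sin (om * (t - b))) R0 HR HEb
              osc_coef_cos_deriv ltac:(intro t; apply Rabs_le, SIN_bound)) as Dcos.
pose proof (osc_coef_drift osc_coef_sin (fun t => - cos (om * (t - b))) R0 HR HEb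
              osc_coef_sin_deriv ltac:(intro t; cbv beta; rewrite Rabs_Ropp; apply Rabs_le, COS_bound))
  as Dsin.
unfold osc_coef_cos, osc_coef_sin in Dcos, Dsin.
rewrite Hca, Hsa, Hb, cos_0, sin_0 in Dcos, Dsin.
split.
- replace (w1 a + w1 b) with (1 * w1 b - 0 * w2 b / om - (-1 * w1 a - 0 * w2 a / om))
    by (field; lra).
  exact Dcos.
- replace (w2 a + w2 b) with (om * (0 * w1 b + 1 * w2 b / om - (0 * w1 a + -1 * w2 a / om)))
    by (field; lra).
  rewrite Rabs_mult, Rabs_pos_eq by lra.
  apply Rmult_le_reg_l with (/ om); [apply Rinv_0_lt_compat; lra|].
  rewrite <- Rmult_assoc, Rinv_l by lra.
  replace (/ om * (M * (b - a) * exp (M * (b - a)) * R0))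
    with (M * (b - a) * exp (M * (b - a)) * R0 / om) by (field; lra).
  lra.
Qed.

End PerturbedOscillator.

Definition liouville_w1 (Y : R -> R) (t : R) : R := sqrt (sin t) * Y t.
Definition liouville_w2 (Y P : R -> R) (t : R) : R := (P t + cos t / 2 * Y t) / sqrt (sin t).

Lemma liouville_transform (om : R) (Y P : R -> R) (t : R) :
  solves_mode om Y P -> 0 < t < PI ->
  is_derive (liouville_w1 Y) t (liouville_w2 Y P t) /\
  is_derive (liouville_w2 Y P) t (- (om ^ 2 + / (4 * sin t ^ 2)) * liouville_w1 Y t).
Proof.
intros Hsol Ht; destruct (Hsol t Ht) as [DY DP].
pose proof (sin_gt_0 t (proj1 Ht) (proj2 Ht)) as Hs.
pose proof (sin2_cos2 t) as Hsc; unfold Rsqr in Hsc.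
set (r := sqrt (sin t)).
assert (Hr : 0 < r) by (apply sqrt_lt_R0; exact Hs).
assert (Er : sin t = r * r) by (unfold r; rewrite sqrt_sqrt; lra).
unfold liouville_w1, liouville_w2; split.
- auto_derive; [repeat split; [lra | eexists; eassumption]|].
  rewrite_Derive DY; fold r; rewrite Er; field; lra.
- auto_derive; [repeat split; (eexists; eassumption) || (fold r; lra) || exact Hs|].
  rewrite_Derive DY; rewrite_Derive DP; fold r.
  assert (Ec : cos t * cos t = 1 - r * r * (r * r)) by (rewrite <- Er; lra).
  rewrite Er; field_simplify; [|lra|lra].
  replace (cos t ^ 2) with (cos t * cos t) by ring; rewrite Ec; field; lra.
Qed.

Definition half_turn_drift (a : R) : R :=
  / (4 * sin a ^ 2) * (PI / 2 - a) * exp (/ (4 * sin a ^ 2) * (PI / 2 - a)).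

Lemma half_turn_drift_nonneg (a : R) : 0 < a <= PI / 2 -> 0 <= half_turn_drift a.
Proof.
intros Ha; assert (0 < sin a) by (apply sin_gt_0; pose proof PI_RGT_0; lra).
unfold half_turn_drift; apply Rmult_le_pos; [apply Rmult_le_pos|apply Rlt_le, exp_pos];
  [apply Rlt_le, Rinv_0_lt_compat; nra | lra].
Qed.

Lemma mode_half_turn (om a R0 : R) (Y P : R -> R) :
  1 <= om -> solves_mode om Y P -> 0 < a <= PI / 2 -> cos (om * (PI / 2 - a)) = -1 ->
  0 <= R0 -> Y (PI / 2) ^ 2 + (P (PI / 2) / om) ^ 2 <= R0 ^ 2 ->
  Rabs (liouville_w1 Y a + Y (PI / 2)) <= half_turn_drift a * R0 / om /\
  Rabs (liouville_w2 Y P a + P (PI / 2)) <= half_turn_drift a * R0.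
Proof.
intros Hom Hsol Ha Hc HR HE.
pose proof PI_RGT_0.
assert (Hin : forall t, a <= t <= PI / 2 -> 0 < t < PI) by (intros; lra).
assert (W1 : liouville_w1 Y (PI / 2) = Y (PI / 2))
  by (unfold liouville_w1; rewrite sin_PI2, sqrt_1; ring).
assert (W2 : liouville_w2 Y P (PI / 2) = P (PI / 2))
  by (unfold liouville_w2; rewrite sin_PI2, cos_PI2, sqrt_1; field).
rewrite <- W1, <- W2; unfold half_turn_drift.
apply (osc_half_turn (liouville_w1 Y) (liouville_w2 Y P) (fun t => / (4 * sin t ^ 2)));
  [exact Hom | lra | ..].
- intros t Ht; exact (proj1 (liouville_transform om Y P t Hsol (Hin t Ht))).
- intros t Ht; exact (proj2 (liouville_transform om Y P t Hsol (Hin t Ht))).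
- intros t Ht.
  assert (Hsa : 0 < sin a) by (apply sin_gt_0; lra).
  assert (Hst : sin a <= sin t) by (apply sin_incr_1; lra).
  split; [apply Rlt_le, Rinv_0_lt_compat; nra|].
  apply Rinv_le_contravar; nra.
- exact HR.
- unfold osc_energy; rewrite W1, W2; exact HE.
- exact Hc.
Qed.

(* Trace of the linear map [(Y b, P b) |-> (Y a, P a)] on the solutions spanned by
   [(u, pu)] and [(v, pv)]. *)
Definition transfer_trace (u pu v pv : R -> R) (a b : R) : R :=
  (pv b * u a - pu b * v a - v b * pu a + u b * pv a) / wronskian u pu v pv b.

Lemma normalized_trace_le (r c e x y z : R) :
  0 < r -> Rabs c <= 1 -> Rabs (r * x + 1) <= e -> Rabs (r * y) <= e ->
  Rabs ((z + c / 2 * y) / r + 1) <= e ->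
  x + z <= - (/ r + r) + e * (2 / r + r).
Proof.
intros Hr Hc Hx Hy Hz.
apply Rabs_le_between in Hx; apply Rabs_le_between in Hz.
assert (Hcy : - (c * (r * y)) <= e).
{ pose proof (Rle_abs (- (c * (r * y)))) as H.
  rewrite Rabs_Ropp, Rabs_mult in H.
  pose proof (Rabs_pos (r * y)); pose proof (Rabs_pos c); nra. }
assert (Ex : x = (r * x + 1) / r - / r) by (field; lra).
assert (Ez : z = r * ((z + c / 2 * y) / r + 1) - r - c * (r * y) / 2 / r) by (field; lra).
rewrite Ex, Ez.
assert (T1 : (r * x + 1) / r <= e / r)
  by (apply Rmult_le_compat_r; [apply Rlt_le, Rinv_0_lt_compat|]; lra).
assert (T2 : r * ((z + c / 2 * y) / r + 1) <= r * e) by (apply Rmult_le_compat_l; lra).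
assert (T3 : - (c * (r * y) / 2 / r) <= e / r).
{ replace (- (c * (r * y) / 2 / r)) with (- (c * (r * y)) / 2 * / r) by (field; lra).
  apply Rmult_le_compat_r; [apply Rlt_le, Rinv_0_lt_compat|]; lra. }
replace (e * (2 / r + r)) with (e / r + r * e + e / r) by (field; lra).
lra.
Qed.

Lemma transfer_trace_le (om a : R) (u pu v pv : R -> R) :
  1 <= om -> solves_mode om u pu -> solves_mode om v pv ->
  0 < a <= PI / 2 -> cos (om * (PI / 2 - a)) = -1 ->
  wronskian u pu v pv (PI / 2) <> 0 ->
  let r := sqrt (sin a) in
  transfer_trace u pu v pv a (PI / 2)
    <= - (/ r + r) + half_turn_drift a * (2 / r + r) / om.
Proof.
intros Hom Hu Hv Ha Hc HK r.
set (b := PI / 2); set (K := wronskian u pu v pv b) in *.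
set (U := fun s => pv b / K * u s + - pu b / K * v s).
set (PU := fun s => pv b / K * pu s + - pu b / K * pv s).
set (V := fun s => - v b / K * u s + u b / K * v s).
set (PV := fun s => - v b / K * pu s + u b / K * pv s).
assert (Ub : U b = 1) by (unfold U, K, wronskian; field; exact HK).
assert (PUb : PU b = 0) by (unfold PU; field; exact HK).
assert (Vb : V b = 0) by (unfold V; field; exact HK).
assert (PVb : PV b = 1) by (unfold PV, K, wronskian; field; exact HK).
destruct (mode_half_turn om a 1 U PU Hom (solves_mode_lin _ _ _ _ _ _ _ Hu Hv) Ha Hc
            ltac:(lra) ltac:(fold b; rewrite Ub, PUb; lra)) as [BU _].
destruct (mode_half_turn om a (/ om) V PV Hom (solves_mode_lin _ _ _ _ _ _ _ Hu Hv) Ha Hc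
            ltac:(apply Rlt_le, Rinv_0_lt_compat; lra)
            ltac:(fold b; rewrite Vb, PVb; right; field; lra)) as [BV1 BV2].
fold b in BU, BV1, BV2; rewrite Ub in BU; rewrite Vb, Rplus_0_r in BV1; rewrite PVb in BV2.
unfold liouville_w1, liouville_w2 in BU, BV1, BV2; fold r in BU, BV1, BV2.
assert (Hr : 0 < r) by (apply sqrt_lt_R0, sin_gt_0; pose proof PI_RGT_0; lra).
set (e := half_turn_drift a / om).
assert (He : 0 <= e)
  by (apply Rdiv_le_0_compat; [apply half_turn_drift_nonneg|]; lra).
assert (Heom : e / om <= e).
{ apply Rmult_le_reg_r with om; [lra|].
  unfold Rdiv; rewrite Rmult_assoc, Rinv_l by lra; nra. }
replace (half_turn_drift a * (2 / r + r) / om) with (e * (2 / r + r)) by (unfold e; field; lra).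
replace (transfer_trace u pu v pv a b) with (U a + PV a)
  by (unfold transfer_trace, U, PV; fold K; field; exact HK).
apply (normalized_trace_le r (cos a) e (U a) (V a) (PV a)).
- exact Hr.
- apply Rabs_le, COS_bound.
- replace e with (half_turn_drift a * 1 / om) by (unfold e; field; lra); exact BU.
- apply Rle_trans with (e / om); [|exact Heom].
  replace (e / om) with (half_turn_drift a * / om / om) by (unfold e; field; lra); exact BV1.
- replace e with (half_turn_drift a * / om) by (unfold e; field; lra); exact BV2.
Qed.

Lemma Cmod_beta_sq_ge (y : R -> C) (u pu v pv : R -> R) (rho nu t1 t0 : R) :
  rho <> 0 -> sin t0 <> 0 -> sin t1 <> 0 -> wronskian u pu v pv t0 <> 0 ->
  (forall t, y t = (rho * u t + nu * v t, / rho * v t)) ->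
  (forall t, t = t0 \/ t = t1 ->
     Cderiv y t = ((rho * pu t + nu * pv t) / sin t, / rho * pv t / sin t)) ->
  (transfer_trace u pu v pv t1 t0 * wronskian u pu v pv t0) ^ 2
    - 4 * wronskian u pu v pv t0 * wronskian u pu v pv t1
  <= Cmod (beta y t1 t0) ^ 2.
Proof.
intros Hrho H0 H1 HW Hy Hd.
(* [|beta|^2] is [Q^2] plus a discriminant that does not depend on [rho] and [nu]. *)
unfold beta; rewrite !Hy, (Hd t0 (or_introl eq_refl)), (Hd t1 (or_intror eq_refl)), Cmod2_alt.
unfold transfer_trace, wronskian in *.
set (Buu := u t0 * pu t1 - u t1 * pu t0); set (Bvv := v t0 * pv t1 - v t1 * pv t0).
set (Buv := u t0 * pv t1 - u t1 * pv t0); set (Bvu := v t0 * pu t1 - v t1 * pu t0).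
set (Q := rho * rho * Buu + rho * nu * (Buv + Bvu) + nu * nu * Bvv + Bvv / (rho * rho)).
apply Rle_trans with (Q ^ 2 + ((Buv + Bvu) ^ 2 - 4 * Buu * Bvv)).
- match goal with |- ?L <= _ =>
    replace L with ((Buv + Bvu) ^ 2 - 4 * Buu * Bvv)
      by (unfold Buu, Bvv, Buv, Bvu; field; exact HW) end.
  pose proof (pow2_ge_0 Q); lra.
- right; unfold Q, Buu, Bvv, Buv, Bvu; simpl; field; auto.
Qed.

Lemma ymode_eq (rho nu : R) (l : nat) (t : R) :
  ymode rho nu l t = (rho * u0 l t + nu * v0 l t, / rho * v0 l t).
Proof. unfold ymode; apply injective_projections; simpl; ring. Qed.

Lemma Cderiv_ymode (rho nu : R) (n : nat) (t : R) : 0 < t < PI ->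
  Cderiv (ymode rho nu (S n)) t
  = ((rho * pu0 n t + nu * pv0 n t) / sin t, / rho * pv0 n t / sin t).
Proof.
intros Ht; unfold Cderiv; f_equal; apply is_derive_unique.
- apply (is_derive_ext (fun s => rho * u0 (S n) s + nu * v0 (S n) s));
    [intro s; rewrite ymode_eq; reflexivity|].
  exact (proj1 (solves_mode_lin _ _ _ _ _ _ _ (u0_solves_mode n) (v0_solves_mode n) t Ht)).
- apply (is_derive_ext (fun s => 0 * u0 (S n) s + / rho * v0 (S n) s));
    [intro s; rewrite ymode_eq; simpl; ring|].
  replace (/ rho * pv0 n t / sin t) with ((0 * pu0 n t + / rho * pv0 n t) / sin t) by (unfold Rdiv; ring).
  exact (proj1 (solves_mode_lin _ _ _ _ _ _ _ (u0_solves_mode n) (v0_solves_mode n) t Ht)).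
Qed.

Lemma sin_PI10_bounds : 0 < sin (PI / 10) <= / 2.
Proof.
pose proof PI_RGT_0; split; [apply sin_gt_0; lra|].
rewrite <- (Rmult_1_l (/ 2)), <- Rdiv_def, <- sin_PI6; apply sin_incr_1; lra.
Qed.

Lemma trace_sq_ge (r tr e : R) : 0 < r -> r * r <= / 2 -> 0 <= e <= / 100 ->
  tr <= - (/ r + r) + e * (2 / r + r) -> / 20 <= (tr / 2) ^ 2 - 1.
Proof.
intros Hr Hr2 He Htr.
set (A := / r + r) in *.
assert (HA : 0 < A) by (unfold A; pose proof (Rinv_0_lt_compat r Hr); lra).
assert (HA2 : 9 / 2 <= A * A).
{ unfold A; replace ((/ r + r) * (/ r + r)) with (2 + (r * r + / (r * r))) by (field; lra).
  set (s := r * r) in *.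
  assert (Hs : 0 < s) by (unfold s; nra).
  assert (5 / 2 <= s + / s); [|lra].
  apply Rmult_le_reg_r with s; [exact Hs|].
  rewrite Rmult_plus_distr_r, Rinv_l by lra; nra. }
assert (Htr' : tr <= - (49 / 50) * A).
{ assert (e * (2 / r + r) <= A / 50); [|lra].
  assert (2 / r + r <= 2 * A) by (unfold A; pose proof (Rinv_0_lt_compat r Hr); unfold Rdiv; lra).
  apply Rle_trans with (e * (2 * A)); [apply Rmult_le_compat_l; lra | nra]. }
assert ((49 / 50 * A) * (49 / 50 * A) <= tr * tr) by nra.
nra.
Qed.

Lemma beta_ymode_ge (rho nu : R) (n : nat) : 0 < rho ->
  1 <= INR n + 3 / 2 -> 100 * half_turn_drift (PI / 10) <= INR n + 3 / 2 ->
  cos ((INR n + 3 / 2) * (PI / 2 - PI / 10)) = -1 ->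
  / 20 <= Cmod (beta (ymode rho nu (S n)) (PI / 10) (PI / 2)) ^ 2.
Proof.
intros Hrho Hom Hbig Hc.
pose proof PI_RGT_0; pose proof sin_PI10_bounds as Hs10.
assert (H2 : 0 < PI / 2 < PI) by lra; assert (H10 : 0 < PI / 10 < PI) by lra.
assert (HW : forall t, wronskian (u0 (S n)) (pu0 n) (v0 (S n)) (pv0 n) t = - / 2)
  by exact (u0_v0_wronskian n).
pose proof (Cmod_beta_sq_ge (ymode rho nu (S n)) (u0 (S n)) (pu0 n) (v0 (S n)) (pv0 n)
              rho nu (PI / 10) (PI / 2) ltac:(lra) ltac:(rewrite sin_PI2; lra) ltac:(lra)
              ltac:(rewrite HW; lra) (ymode_eq rho nu (S n))
              ltac:(intros t [-> | ->]; apply Cderiv_ymode; lra)) as Hbeta.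
rewrite !HW in Hbeta.
pose proof (transfer_trace_le (INR n + 3 / 2) (PI / 10) _ _ _ _ Hom (u0_solves_mode n)
              (v0_solves_mode n) ltac:(lra) Hc ltac:(rewrite HW; lra)) as Htr.
set (r := sqrt (sin (PI / 10))) in Htr.
assert (Hr : 0 < r) by (apply sqrt_lt_R0; lra).
eapply Rle_trans; [|exact Hbeta].
replace ((transfer_trace (u0 (S n)) (pu0 n) (v0 (S n)) (pv0 n) (PI / 10) (PI / 2) * - / 2) ^ 2
           - 4 * - / 2 * - / 2)
  with ((transfer_trace (u0 (S n)) (pu0 n) (v0 (S n)) (pv0 n) (PI / 10) (PI / 2) / 2) ^ 2 - 1)
  by field.
apply (trace_sq_ge r _ (half_turn_drift (PI / 10) / (INR n + 3 / 2))).
- exact Hr.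
- unfold r; rewrite sqrt_sqrt; lra.
- pose proof (half_turn_drift_nonneg (PI / 10) ltac:(lra)); split.
  + apply Rdiv_le_0_compat; lra.
  + apply Rmult_le_reg_r with (INR n + 3 / 2); [lra|].
    unfold Rdiv; rewrite Rmult_assoc, Rinv_l by lra; lra.
- replace (half_turn_drift (PI / 10) / (INR n + 3 / 2) * (2 / r + r))
    with (half_turn_drift (PI / 10) * (2 / r + r) / (INR n + 3 / 2)) by (field; lra).
  exact Htr.
Qed.

Lemma cos_phase_half_turn (j : nat) :
  cos ((INR (5 * j + 1) + 3 / 2) * (PI / 2 - PI / 10)) = -1.
Proof.
replace ((INR (5 * j + 1) + 3 / 2) * (PI / 2 - PI / 10)) with (PI + 2 * INR j * PI)
  by (rewrite plus_INR, mult_INR; simpl (INR 5); simpl (INR 1); field).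
rewrite cos_period; exact cos_PI.
Qed.

Lemma ex_series_not_frequently_ge (a : nat -> R) (eps : R) : ex_series a -> 0 < eps ->
  ~ (forall N, exists n, (N <= n)%nat /\ eps <= a n).
Proof.
intros Ha Heps Hfreq.
apply ex_series_lim_0, is_lim_seq_spec in Ha.
destruct (Ha (mkposreal eps Heps)) as [N HN].
destruct (Hfreq N) as [n [Hn Hge]].
specialize (HN n Hn); simpl in HN; rewrite Rminus_0_r in HN.
pose proof (Rle_abs (a n)); lra.
Qed.

Theorem mainTheorem8 :
  ~ (exists (rho nu : nat -> R),
       (forall l : nat, 0 < rho l) /\
       (forall t0 t1 : R, 0 < t0 < PI -> 0 < t1 < PI ->
          ex_series (fun l : nat =>
            (Cmod (beta (ymode (rho l) (nu l) l) t1 t0)) ^ 2))).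
Proof.
intros [rho [nu [Hpos Hser]]].
pose proof PI_RGT_0.
apply (ex_series_not_frequently_ge _ (/ 20) (Hser (PI / 2) (PI / 10) ltac:(lra) ltac:(lra)));
  [lra|].
intros N.
destruct (INR_unbounded (100 * half_turn_drift (PI / 10))) as [M HM].
set (n := (5 * (N + M) + 1)%nat).
exists (S n); split; [lia|].
assert (HMn : INR M <= INR n) by (apply le_INR; unfold n; lia).
pose proof (pos_INR n).
apply beta_ymode_ge; [apply Hpos | lra | lra | apply cos_phase_half_turn].
Qed.
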